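(* Let $X$ be a Banach space containing no (isomorphic) copy of $c_0$, and let $\sum x_n$ be a series in $X$ which is not unconditionally convergent. Then the sets $E=\left\{s \in S : \left(\sum_{i=1}^n x_{s(i)}\right)_n \text{ is bounded}\right\}$ and $F=\left\{p \in P : \left(\sum_{i=1}^n x_{p(i)}\right)_n \text{ is bounded}\right\}$ are meager in $S$ and $P$, respectively.
   Context: $S=\{s\in\mathbb{N}^{\mathbb{N}} : s \text{ strictly increasing}\}$ and $P=\{p\in\mathbb{N}^{\mathbb{N}} : p \text{ a bijection of }\mathbb{N}\}$, with the subspace topology of $\mathbb{N}^{\mathbb{N}}$ (product of discrete spaces). *)

From HB Require Import structures.
From mathcomp Require Import all_boot all_order all_algebra.
From mathcomp Require Import all_classical all_reals all_analysis.
Set Implicit Arguments. Unset Strict Implicit. Unset Printing Implicit Defensive.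
Import Order.TTheory GRing.Theory Num.Theory.
Import numFieldNormedType.Exports.
Local Open Scope classical_set_scope.
Local Open Scope ring_scope.

Definition baire := {ptws nat -> nat}.

Definition Sset : set baire := [set s | forall i j : nat, (i < j)%N -> (s i < s j)%N].
Definition Pset : set baire := [set p | bijective p].

Definition nowhere_dense (T : topologicalType) (A : set T) : Prop :=
  (closure A)^° = set0.
Definition meager (T : topologicalType) (A : set T) : Prop :=
  exists F : (set T)^nat, (forall n, nowhere_dense (F n)) /\ A `<=` \bigcup_n F n.

Definition c0 {R : realType} : set (nat -> R) := [set u | u @ \oo --> (0 : R)].
Definition supnorm {R : realType} (u : nat -> R) : R := sup (range (fun n => `|u n|)).

(** X contains an isomorphic copy of c_0: there is a linear map T : c_0 -> X
    which is an isomorphism onto its image (bounded and bounded below). *)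
Definition contains_c0 {R : realType} (X : normedModType R) : Prop :=
  exists (T : (nat -> R) -> X) (m M : R),
    (forall (a : R) (u v : nat -> R), c0 u -> c0 v -> T (a *: u + v) = a *: T u + T v) /\
    0 < m /\ 0 < M /\
    (forall u, c0 u -> m * supnorm u <= `|T u| /\ `|T u| <= M * supnorm u).

Definition psums {R : realType} (X : normedModType R) (x : nat -> X) (f : nat -> nat) :
  nat -> X := series (fun i => x (f i)).

Definition uncond_convergent {R : realType} (X : normedModType R) (x : nat -> X) : Prop :=
  forall p : nat -> nat, bijective p -> cvg (psums x p @ \oo).

Definition bounded_seq {R : realType} (X : normedModType R) (y : nat -> X) : Prop :=
  exists M : R, forall n, `|y n| <= M.

From HB Require Import structures.
From mathcomp Require Import all_boot all_order all_algebra.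
From mathcomp Require Import all_classical all_reals all_analysis.
From mathcomp Require Import lra.
Import Order.TTheory GRing.Theory Num.Theory.
Import numFieldNormedType.Exports.
Local Open Scope classical_set_scope.
Local Open Scope ring_scope.

(* Bounded partial sums form a closed condition on N^N, so the set of s in S
   (or P) with all partial sums of norm <= M is closed; if it had interior,
   all members of some basic cylinder (a fixed prefix f 0, ..., f (n-1))
   would have partial sums <= M.  Any finite set F of indices above the
   prefix can be appended to it by an increasing sequence, resp. a bijection,
   so every such tail sum \sum_(j in F) x j has norm <= 2M.
   Bessaga-Pelczynski: if the series were then not unconditionally
   convergent, a divergent rearrangement would split into disjoint blocks u_k
   with |u_k| >= e and all finite subsums bounded.  Norming functionals of
   the u_k (Hahn-Banach) and a subsequence on which their off-diagonal values
   are summably small make a |-> \sum_k a_k u_(l k) an isomorphism from c_0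
   into X. *)

(** * Norming functionals *)

Section NormingFunctional.
Context {R : realType} {X : normedModType R}.

(* [G] is the graph of a linear functional on a subspace, dominated by the norm;
   the last clause pins the value [|z|] at [z] while letting the (empty) union
   of an empty chain qualify for Zorn's lemma *)
Definition dominated_graph (z : X) (G : set (X * R)) :=
  [/\ (forall p q, G p -> G q -> G (p.1 + q.1, p.2 + q.2)),
      (forall a p, G p -> G (a *: p.1, a * p.2)),
      (forall p, G p -> p.2 <= `|p.1|) &
      (G = set0 \/ G (z, `|z|))].

Lemma dominated_graph_functional {z G y r s} :
  dominated_graph z G -> G (y, r) -> G (y, s) -> r = s.
Proof.
case=> Gadd Gsc Gle _ Gr Gs.
have /= := Gle _ (Gadd _ _ Gr (Gsc (-1) _ Gs)).
have /= := Gle _ (Gadd _ _ Gs (Gsc (-1) _ Gr)).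
rewrite scaleN1r subrr normr0 !mulN1r !subr_le0 => sr rs.
by apply/eqP; rewrite eq_le rs sr.
Qed.

Lemma dominated_graph_extend {z A y} : dominated_graph z A -> A (z, `|z|) ->
  (forall r, ~ A (y, r)) -> exists2 B, A `<` B & dominated_graph z B.
Proof.
case=> Aadd Asc Ale _ Az nAy.
pose L := [set p.2 - `|p.1 - y| | p in A].
have ubL p' : A p' -> ubound L (`|p'.1 + y| - p'.2).
  move=> Ap' _ [p Ap <-].
  have /= := Ale _ (Aadd _ _ Ap Ap').
  have := ler_normD (p.1 - y) (p'.1 + y).
  rewrite addrACA addNr addr0; lra.
have supL : has_sup L.
  by split; [exists (`|z| - `|z - y|), (z, `|z|) | exists (`|z + y| - `|z|); exact: (ubL (z, `|z|))].
(* the classical one-step extension: any value between sup L and the bounds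
   [|p'.1 + y| - p'.2] keeps the extended functional dominated *)
pose c := sup L.
have cle p : A p -> c <= `|p.1 + y| - p.2 by move=> Ap; apply: ge_sup (ubL _ Ap); case: supL.
have cge p : A p -> p.2 - `|p.1 - y| <= c by move=> Ap; apply: ub_le_sup; [case: supL | exists p].
exists [set q | exists p t, A p /\ q = (p.1 + t *: y, p.2 + t * c)].
  split.
    by move=> p Ap; exists p, 0; rewrite scale0r mul0r !addr0; case: p Ap.
  move=> /(_ (y, c)) Ayc; apply: (nAy c); apply: Ayc.
  have A00 : A (0, 0) by have := Asc 0 _ Az; rewrite /= scale0r mul0r.
  by exists (0, 0), 1; rewrite /= scale1r mul1r !add0r.
split.
- move=> _ _ [p [t [Ap ->]]] [q [s [Aq ->]]].
  exists (p.1 + q.1, p.2 + q.2), (t + s); split; first exact: Aadd.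
  by rewrite /= scalerDl mulrDl; congr (_, _); exact: addrACA.
- move=> a _ [p [t [Ap ->]]]; exists (a *: p.1, a * p.2), (a * t); split.
    exact: Asc.
  by rewrite /= scalerDr scalerA mulrDr mulrA.
- move=> _ [p [t [Ap ->]]] /=.
  have [tneg|tpos|->] := ltgtP t 0.
  + have ntpos : 0 < - t by rewrite oppr_gt0.
    have -> : p.1 + t *: y = (- t) *: ((- t)^-1 *: p.1 - y).
      by rewrite scalerBr scalerA mulfV ?gt_eqF // scale1r scaleNr opprK.
    have := cge _ (Asc (- t)^-1 _ Ap); rewrite /= normrZ gtr0_norm // => cgt.
    have := ler_wpM2l (ltW ntpos) cgt; rewrite mulrBr mulrA mulfV ?gt_eqF //; lra.
  + have -> : p.1 + t *: y = t *: (t^-1 *: p.1 + y).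
      by rewrite scalerDr scalerA mulfV ?gt_eqF // scale1r.
    have := cle _ (Asc t^-1 _ Ap); rewrite /= => clt.
    have := ler_wpM2l (ltW tpos) clt; rewrite mulrBr mulrA mulfV ?gt_eqF //.
    rewrite normrZ gtr0_norm //; lra.
  + by rewrite scale0r mul0r !addr0; exact: Ale.
- by right; exists (z, `|z|), 0; rewrite scale0r mul0r !addr0.
Qed.

Lemma dominated_graph_bigcup z (F : set (set (X * R))) :
  F `<=` dominated_graph z -> total_on F subset ->
  dominated_graph z (\bigcup_(A in F) A).
Proof.
move=> FP Ftot; split.
- move=> p q [A FA Ap] [B FB Bq].
  have [AB|BA] := Ftot _ _ FA FB.
    by exists B => //; case: (FP _ FB) => + _ _ _; apply => //; exact: AB.
  by exists A => //; case: (FP _ FA) => + _ _ _; apply => //; exact: BA.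
- by move=> a p [A FA Ap]; exists A => //; case: (FP _ FA) => _ + _ _; apply.
- by move=> p [A FA Ap]; case: (FP _ FA) => _ _ + _; apply.
- have [[A FA Az]|nA] := pselect (exists2 A, F A & A (z, `|z|)); first by right; exists A.
  left; apply/seteqP; split => // p [A FA Ap].
  case: (FP _ FA) => _ _ _ [A0|Az]; first by rewrite A0 in Ap.
  by exfalso; apply: nA; exists A.
Qed.

Lemma dominated_graph_line z : dominated_graph z [set (a *: z, a * `|z|) | a in setT].
Proof.
split.
- by move=> _ _ [a _ <-] [b _ <-]; exists (a + b); rewrite /= ?scalerDl ?mulrDl.
- by move=> c _ [a _ <-]; exists (c * a); rewrite /= ?scalerA ?mulrA.
- by move=> _ [a _ <-] /=; rewrite normrZ ler_wpM2r // real_ler_norm // num_real.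
- by right; exists 1; rewrite /= ?scale1r ?mul1r.
Qed.

Lemma norming_functional (z : X) :
  exists g : {scalar X}, (forall y, `|g y| <= `|y|) /\ g z = `|z|.
Proof.
have [A [gA Amax]] : exists A, dominated_graph z A /\ forall B, A `<` B -> ~ dominated_graph z B.
  exact: Zorn_bigcup (@dominated_graph_bigcup z).
have Az : A (z, `|z|).
  case: (gA) => _ _ _ [A0|//]; exfalso; apply: Amax (dominated_graph_line z).
  by rewrite A0; split => // /(_ (z, `|z|)); apply; exists 1; rewrite ?scale1r ?mul1r.
have /choice [g Ag] : forall y, exists r, A (y, r).
  move=> y; apply/not_existsP => nAy.
  by have [B AB gB] := dominated_graph_extend gA Az nAy; exact: Amax AB gB.
case: (gA) => Aadd Asc Ale _.
have g_linear : linear_for *%R g.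
  move=> a u v; apply: (dominated_graph_functional gA (Ag (a *: u + v))).
  exact: Aadd _ _ (Asc a _ (Ag u)) (Ag v).
exists (HB.pack_for {scalar X} g (GRing.isLinear.Build R X R *%R g g_linear)).
split=> [y|]; last exact: (dominated_graph_functional gA (Ag z) Az).
rewrite /= ler_norml (Ale _ (Ag y)) andbT.
by have /= := Ale _ (Asc (-1) _ (Ag y)); rewrite scaleN1r normrN mulN1r lerNl.
Qed.

End NormingFunctional.

(** * A subsequence with small off-diagonal entries *)

Definition infinitely_many (P : nat -> Prop) := forall N, exists2 i, (N <= i)%N & P i.

Lemma infinitely_many_uniq_seq {P : nat -> Prop} : infinitely_many P ->
  forall r, exists s : seq nat, [/\ uniq s, size s = r & forall t, t \in s -> P t].
Proof.
move=> infP r.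
suff [s [B [us ss sPB]]] : exists s B, [/\ uniq s, size s = r &
    forall t, t \in s -> P t /\ (t < B)%N].
  by exists s; split => // t /sPB [].
elim: r => [|r [s [B [us ss sPB]]]]; first by exists [::], 0%N.
have [i Bi Pi] := infP B.
exists (i :: s), i.+1; split => /=.
- by rewrite us andbT; apply/negP => /sPB [_]; rewrite ltnNge Bi.
- by rewrite ss.
- move=> t; rewrite in_cons => /orP [/eqP -> //|/sPB [Pt tB]].
  by split => //; rewrite ltnS ltnW // (leq_trans tB).
Qed.

Lemma sum_ge_size {R : numDomainType} {f : nat -> R} {d : R} {s : seq nat} :
  (forall t, t \in s -> d <= f t) -> (size s)%:R * d <= \sum_(t <- s) f t.
Proof.
elim: s => [|a s IHs] le_d; first by rewrite big_nil mul0r.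
rewrite big_cons /= -addn1 natrD mulrDl mul1r addrC lerD ?le_d ?mem_head //.
by apply: IHs => t ts; rewrite le_d // in_cons ts orbT.
Qed.

Section OffDiagonalSelection.
Context {R : realType} {M : nat -> nat -> R} {C : R}.
Hypothesis row_sums_le : forall k (s : seq nat), uniq s -> \sum_(t <- s) M k t <= C.

Lemma exceeding_entries_bounded {d} : 0 < d -> exists r : nat,
  forall k (s : seq nat), uniq s -> (forall t, t \in s -> d < M k t) -> (size s < r)%N.
Proof.
move=> d_gt0; exists (Num.bound (`|C| / d)) => k s us gt_d.
have := archi_boundP (divr_ge0 (normr_ge0 C) (ltW d_gt0)).
rewrite ltr_pdivrMr // => C_lt; rewrite ltnNge; apply/negP; rewrite -(ler_nat R).
move=> /(ler_wpM2r (ltW d_gt0)).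
have := sum_ge_size (fun t ts => ltW (gt_d t ts)).
have := @row_sums_le k s us; have := ler_norm C; lra.
Qed.

Lemma row_eventually_le k {d} : 0 < d -> exists N, forall i, (N <= i)%N -> M k i <= d.
Proof.
move=> d_gt0; have [r r_bound] := exceeding_entries_bounded d_gt0.
apply: contrapT => /forallNP not_eventually.
have [|s [us sr gt_d]] := @infinitely_many_uniq_seq (fun i => d < M k i) _ r.
  move=> N; have /existsNP [i /not_implyP [Ni /negP]] := not_eventually N.
  by rewrite -ltNge; exists i.
by have := r_bound k s us gt_d; rewrite sr ltnn.
Qed.

Lemma rows_eventually_le (h : nat -> nat) m {d} : 0 < d ->
  exists N, forall j i, (j < m)%N -> (N <= i)%N -> M (h j) i <= d.
Proof.
move=> d_gt0; elim: m => [|m [N leN]]; first by exists 0%N.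
have [N' leN'] := row_eventually_le (h m) d_gt0.
exists (maxn N N') => j i; rewrite ltnS leq_eqVlt geq_max => /orP [/eqP ->|jm] /andP [Ni N'i].
  exact: leN'.
exact: leN.
Qed.

Lemma column_pigeonhole {I : nat -> Prop} {d} : 0 < d -> infinitely_many I ->
  exists2 v, I v & infinitely_many (fun i => I i /\ M i v <= d).
Proof.
move=> d_gt0 infI; apply: contrapT => /forall2NP no_column.
have cofinite_gt v : I v -> exists N, forall i, (N <= i)%N -> I i -> d < M i v.
  move=> Iv; have [//|/existsNP [N leN]] := no_column v.
  exists N => i Ni Ii; rewrite ltNge; apply/negP => Mle.
  by apply: leN; exists i.
have [r r_bound] := exceeding_entries_bounded d_gt0.
have [s [us sr sI]] := infinitely_many_uniq_seq infI r.
have [N leN] : exists N, forall t i, t \in s -> (N <= i)%N -> I i -> d < M i t.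
  elim: (s) sI => [|a s' IHs] s'I; first by exists 0%N.
  have [|N1 leN1] := IHs; first by move=> t ts; apply: s'I; rewrite in_cons ts orbT.
  have [N2 leN2] := cofinite_gt a (s'I a (mem_head _ _)).
  exists (maxn N1 N2) => t i; rewrite in_cons geq_max => /orP [/eqP ->|ts] /andP [N1i N2i].
    exact: leN2.
  exact: leN1.
have [i Ni Ii] := infI N.
by have := r_bound i s us (fun t ts => leN t i ts Ni Ii); rewrite sr ltnn.
Qed.

Context {d : nat -> R}.
Hypothesis d_gt0 : forall j, 0 < d j.

(* [candidate k l i]: with [l 0, ..., l k.-1] chosen, [i] is still admissible
   as [l k]; the row bound [d k] is re-imposed at every step *)
Definition candidate k (l : nat -> nat) i :=
  forall j, (j < k)%N -> [/\ (l j < i)%N, M i (l j) <= d j & M (l j) i <= d k].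

Definition extend (l : nat -> nat) k v j := if j == k then v else l j.

Lemma candidate_step {k l} : infinitely_many (candidate k l) ->
  exists v, candidate k l v /\ infinitely_many (candidate k.+1 (extend l k v)).
Proof.
move=> infI; have [v Iv infIv] := column_pigeonhole (d_gt0 k) infI.
exists v; split => //.
have [N leN] := rows_eventually_le (extend l k v) k.+1 (d_gt0 k.+1).
move=> N'; have [i] := infIv (maxn N' (maxn N v.+1)).
rewrite !geq_max => /and3P [N'i Ni vi] [Ii Miv].
exists i => // j jk; have := leN j i jk Ni; rewrite /extend.
case: eqP => [-> //|/eqP jnk Mji].
have jk' : (j < k)%N by rewrite ltn_neqAle jnk -ltnS.
by have [] := Ii j jk'.
Qed.

Lemma candidate0 l : infinitely_many (candidate 0 l).
Proof. by move=> N; exists N. Qed.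

Fixpoint selection n : {l : nat -> nat | infinitely_many (candidate n l)} :=
  if n is n'.+1 then
    let l := selection n' in
    let v := cid (candidate_step (svalP l)) in
    exist _ (extend (sval l) n' (sval v)) (proj2 (svalP v))
  else exist _ (fun _ => 0%N) (candidate0 _).

Definition selected n := sval (cid (candidate_step (svalP (selection n)))).

Lemma selectionE n j : (j < n)%N -> sval (selection n) j = selected j.
Proof.
elim: n => [//|n IHn] jn /=; rewrite /extend.
case: eqP => [-> //|/eqP jnn]; apply: IHn.
by rewrite ltn_neqAle jnn -ltnS.
Qed.

Lemma selected_candidate n : candidate n (sval (selection n)) (selected n).
Proof. exact: (proj1 (svalP (cid (candidate_step (svalP (selection n)))))). Qed.

Lemma off_diagonal_subsequence : exists l : nat -> nat,
  {homo l : i j / (i < j)%N} /\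
  (forall k j, k != j -> M (l k) (l j) <= d j).
Proof.
exists selected; split.
  by move=> i j ij; have [+ _ _] := selected_candidate j i ij; rewrite selectionE.
move=> k j; rewrite neq_ltn => /orP [kj|jk].
  by have [_ _] := selected_candidate j k kj; rewrite selectionE.
by have [_ + _] := selected_candidate k j jk; rewrite selectionE.
Qed.

End OffDiagonalSelection.

(** * A copy of c_0 from a sequence with bounded subsums *)

Section SubsumsBounded.
Context {R : realType} {X : normedModType R}.

Definition subsums_le (w : nat -> X) (K : R) :=
  forall s : seq nat, uniq s -> `|\sum_(t <- s) w t| <= K.

Lemma subsums_le_ge0 {w K} : subsums_le w K -> 0 <= K.
Proof. by move=> /(_ [::] isT); rewrite big_nil normr0. Qed.

Lemma subsums_le_comp w K (l : nat -> nat) :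
  injective l -> subsums_le w K -> subsums_le (w \o l) K.
Proof.
by move=> linj wK s us; have := wK (map l s); rewrite big_map map_inj_uniq //; apply.
Qed.

Lemma subsums_le_functional {w K} {g : {scalar X}} :
  (forall y, `|g y| <= `|y|) -> subsums_le w K ->
  forall s : seq nat, uniq s -> \sum_(t <- s) `|g (w t)| <= 2 * K.
Proof.
move=> g_le wK s us; rewrite mulr2n mulrDl mul1r (bigID (fun t => 0 <= g (w t))) /=.
have le_K (P : pred nat) : `|g (\sum_(t <- s | P t) w t)| <= K.
  by apply: le_trans (g_le _) _; rewrite -big_filter; apply: wK; exact: filter_uniq.
apply: lerD.
  rewrite (eq_bigr (fun t => g (w t))); last by move=> t /ger0_norm.
  by rewrite -linear_sum; apply: le_trans (le_K _); exact: ler_norm.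
rewrite (eq_bigr (fun t => - g (w t))); last by move=> t; rewrite -ltNge => /ltr0_norm.
by rewrite sumrN -linear_sum; apply: le_trans (le_K _); rewrite -normrN; exact: ler_norm.
Qed.

Lemma norm_sum_scale_le {w K} {a : nat -> R} {A} {s : seq nat} :
  subsums_le w K -> 0 <= A -> uniq s -> (forall j, j \in s -> `|a j| <= A) ->
  `|\sum_(j <- s) a j *: w j| <= 2 * K * A.
Proof.
move=> wK A_ge0 us a_le.
have [g [g_le <-]] := norming_functional (\sum_(j <- s) a j *: w j).
rewrite linear_sum (mulrC _ A); apply: le_trans (ler_norm _) _.
apply: le_trans (ler_norm_sum _ _ _) _.
apply: le_trans (ler_wpM2l A_ge0 (subsums_le_functional g_le wK s us)).
rewrite mulr_sumr big_seq_cond [X in _ <= X]big_seq_cond; apply: ler_sum => j /andP [js _].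
by rewrite linearZ normrM ler_wpM2r ?a_le.
Qed.

End SubsumsBounded.

Section NormingLowerBound.
Context {R : realType} {X : normedModType R}.
Variables (w : nat -> X) (h : nat -> {scalar X}) (e : R).
Hypothesis h_le : forall k y, `|h k y| <= `|y|.
Hypothesis h_diag : forall k, e <= `|h k (w k)|.
Hypothesis h_off : forall k n, \sum_(0 <= j < n | j != k) `|h k (w j)| <= e / 2.

Lemma norm_partial_sum_ge (a : nat -> R) A n k : (forall j, `|a j| <= A) -> (k < n)%N ->
  `|a k| * e - A * (e / 2) <= `|\sum_(0 <= j < n) a j *: w j|.
Proof.
move=> a_le kn; have A_ge0 : 0 <= A := le_trans (normr_ge0 _) (a_le 0%N).
apply: le_trans (h_le k _).
rewrite linear_sum (bigD1_seq k) ?mem_index_iota ?iota_uniq //= [h k (a k *: _)]linearZ.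
set rest := \sum_(_ <- _ | _) _.
have diag : `|a k| * e <= `|a k * h k (w k)| by rewrite normrM ler_wpM2l.
have off : `|rest| <= A * (e / 2).
  apply: le_trans (ler_norm_sum _ _ _) _.
  apply: le_trans (ler_wpM2l A_ge0 (h_off k n)).
  rewrite mulr_sumr; apply: ler_sum => j _.
  by rewrite linearZ normrM ler_wpM2r.
have := ler_normD (a k * h k (w k) + rest) (- rest); rewrite addrK normrN; lra.
Qed.

End NormingLowerBound.

Lemma c0_le_supnorm {R : realType} {a : nat -> R} : c0 a -> forall j, `|a j| <= supnorm a.
Proof.
move=> a0 j; apply: ub_le_sup; last by exists j.
apply/bounded_fun_has_ubound/cvg_seq_bounded/cvg_ex; exists 0.
by rewrite -(normr0 R); exact: cvg_norm.
Qed.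

Definition series_map {R : realType} {X : completeNormedModType R} (w : nat -> X) (a : nat -> R) :=
  lim (series (fun j => a j *: w j) @ \oo).

Section SeriesMap.
Context {R : realType} {X : completeNormedModType R} {w : nat -> X} {K : R}.
Hypothesis wK : subsums_le w K.

Lemma cvg_series_c0_scale {a} : c0 a -> cvg (series (fun j => a j *: w j) @ \oo).
Proof.
move=> a0; apply/cauchy_cvgP/cauchy_seriesP => r r_gt0.
have K_ge0 := subsums_le_ge0 wK.
pose q := r / (2 * K + 1).
have q_gt0 : 0 < q by rewrite divr_gt0 //; lra.
have [N _ a_lt] : \forall t \near \oo, `|a t| < q by exact: cvgr0_norm_lt.
exists ([set m | (N <= m)%N], [set m | (N <= m)%N]); first by split; exists N.
case=> m1 m2 /= [Nm1 _].
apply: le_lt_trans (norm_sum_scale_le wK (ltW q_gt0) (iota_uniq _ _) _) _.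
  move=> j; rewrite mem_index_iota => /andP [m1j _].
  by apply/ltW/a_lt; rewrite /= (leq_trans Nm1 m1j).
rewrite /q mulrA ltr_pdivrMr; lra.
Qed.

Lemma series_map_linear c u v : c0 u -> c0 v ->
  series_map w (c *: u + v) = c *: series_map w u + series_map w v.
Proof.
move=> u0 v0; rewrite /series_map.
have -> : (fun j => (c *: u + v) j *: w j) =
    c *: (fun j => u j *: w j) + (fun j => v j *: w j).
  by apply/funext => j /=; rewrite !fctE scalerDl scalerA.
have cu := cvg_series_c0_scale u0; have cv := cvg_series_c0_scale v0.
by rewrite seriesD seriesZ limD ?limZl_tmp //; exact: cvgZl_tmp.
Qed.

Lemma norm_series_map_le a : c0 a -> `|series_map w a| <= 2 * K * supnorm a.
Proof.
move=> a0; apply: (cvgr_to_le (cvg_norm (cvg_series_c0_scale a0))).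
near=> n; rewrite seriesEnat /=; apply: norm_sum_scale_le (iota_uniq _ _) _ => //.
  exact: le_trans (normr_ge0 _) (c0_le_supnorm a0 0).
by move=> j _; exact: c0_le_supnorm.
Unshelve. all: by end_near.
Qed.

End SeriesMap.

Section C0Copy.
Context {R : realType} {X : completeNormedModType R}.
Variables (w : nat -> X) (h : nat -> {scalar X}) (e K : R).
Hypothesis e_gt0 : 0 < e.
Hypothesis wK : subsums_le w K.
Hypothesis h_le : forall k y, `|h k y| <= `|y|.
Hypothesis h_diag : forall k, e <= `|h k (w k)|.
Hypothesis h_off : forall k n, \sum_(0 <= j < n | j != k) `|h k (w j)| <= e / 2.

Lemma norm_series_map_ge a : c0 a -> e / 2 * supnorm a <= `|series_map w a|.
Proof.
move=> a0; have a_le := c0_le_supnorm a0.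
have ge_k k : `|a k| * e - supnorm a * (e / 2) <= `|series_map w a|.
  apply: (cvgr_to_ge (cvg_norm (cvg_series_c0_scale wK a0))).
  near=> n; rewrite seriesEnat /=; apply: norm_partial_sum_ge h_le h_diag h_off _ _ _ _ a_le _.
  by near: n; exists k.+1.
have : supnorm a <= (`|series_map w a| + supnorm a * (e / 2)) / e.
  apply: ge_sup; first by exists `|a 0%N|, 0%N.
  by move=> _ [k _ <-]; rewrite ler_pdivlMr //; have := ge_k k; lra.
rewrite ler_pdivlMr // => le_sup; nra.
Unshelve. all: by end_near.
Qed.

Lemma contains_c0_of_norming_system : contains_c0 X.
Proof.
have K_gt0 : 0 < K.
  apply: lt_le_trans e_gt0 _; apply: le_trans (h_diag 0%N) _; apply: le_trans (h_le _ _) _.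
  by have := wK [:: 0%N] isT; rewrite big_seq1.
exists (series_map w), (e / 2), (2 * K); split; first exact: series_map_linear wK.
split; first by rewrite divr_gt0.
split; first by rewrite mulr_gt0.
by move=> a a0; split; [exact: norm_series_map_ge | exact: norm_series_map_le].
Qed.

End C0Copy.

Lemma contains_c0_of_subsums_le {R : realType} {X : completeNormedModType R}
    {u : nat -> X} {e K : R} :
  0 < e -> (forall k, e <= `|u k|) -> subsums_le u K -> contains_c0 X.
Proof.
move=> e_gt0 u_ge uK.
have /choice [G G_norming] : forall k, exists g : {scalar X},
    (forall y, `|g y| <= `|y|) /\ g (u k) = `|u k| by move=> k; exact: norming_functional.
have row_sums k s : uniq s -> \sum_(t <- s) `|G k (u t)| <= 2 * K.
  exact: subsums_le_functional (proj1 (G_norming k)) uK s.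
(* off-diagonal tolerances with total mass e / 2 *)
pose d := geometric (e / 4) (2^-1 : R).
have d_gt0 j : 0 < d j by rewrite /= mulr_gt0 ?exprn_gt0 ?divr_gt0 ?invr_gt0.
have [l [l_incr l_off]] := off_diagonal_subsequence row_sums d_gt0.
apply: (@contains_c0_of_norming_system _ _ (u \o l) (G \o l) e K) => //.
- exact: subsums_le_comp (incn_inj (leq_mono l_incr)) uK.
- by move=> k; exact: (proj1 (G_norming _)).
- by move=> k /=; rewrite (proj2 (G_norming _)) normr_id.
move=> k n; apply: (@le_trans _ _ (series d n)).
  rewrite seriesEnat big_mkcond /=; apply: ler_sum => j _.
  by case: eqP => [_|/eqP jk]; [exact: ltW | apply: l_off; rewrite eq_sym].
apply: le_trans (geometric_le_lim _ _ _ _) _.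
- by rewrite divr_ge0 // ltW.
- by rewrite invr_gt0.
- by rewrite gtr0_norm ?invr_gt0 // invf_lt1 // ltr1n.
- have -> : 1 - 2^-1 = 2^-1 :> R by rewrite {1}(splitr 1) mul1r addrK.
  by rewrite invrK; lra.
Qed.

(** * Unconditional convergence *)
Lemma uniq_flatten_blocks (a b : nat -> nat) (s : seq nat) :
  (forall k k', (k < k')%N -> (b k <= a k')%N) -> uniq s ->
  uniq (flatten [seq index_iota (a k) (b k) | k <- s]).
Proof.
move=> ordered; elim: s => [//|t s IHs] /= /andP [ts us].
rewrite cat_uniq iota_uniq IHs // andbT /=; apply/hasPn => i /flatten_mapP [t' t's].
rewrite !mem_index_iota => /andP [at'i ib't']; apply/negP => /andP [ati ibt].
have [tt'|t't|tt'] := ltngtP t t'.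
- by have := leq_trans (ordered _ _ tt') at'i; rewrite leqNgt ibt.
- by have := leq_trans (ordered _ _ t't) ati; rewrite leqNgt ib't'.
- by move: ts; rewrite tt' t's.
Qed.

Lemma not_cvg_series_blocks {R : realType} {X : completeNormedModType R} {y : nat -> X} N :
  ~ cvg (series y @ \oo) -> exists2 e, 0 < e & exists a b : nat -> nat,
  [/\ forall k, (N <= a k)%N, forall k k', (k < k')%N -> (b k <= a k')%N &
      forall k, e <= `|\sum_(a k <= i < b k) y i|].
Proof.
move=> ncvg; have : ~ cauchy (series y @ \oo) by move/cauchy_cvgP.
rewrite cauchy_seriesP => /existsNP [e /not_implyP [e_gt0 not_near]].
have /choice [f f_block] : forall n, exists ab : nat * nat,
    [/\ (n <= ab.1)%N, (ab.1 <= ab.2)%N & e <= `|\sum_(ab.1 <= k < ab.2) y k|].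
  move=> n; apply: contrapT => /forallNP no_block; apply: not_near.
  exists ([set k | (n <= k)%N], [set k | (n <= k)%N]); first by split; exists n.
  case=> m1 m2 /= [nm1 nm2]; rewrite ltNge; apply/negP => e_le.
  apply: (no_block (m1, m2)); split => //=; rewrite leqNgt; apply/negP => m21.
  by move: e_le; rewrite big_geq ?normr0 ?leNgt ?e_gt0 // ltnW.
pose fix m k := if k is k'.+1 then (f (m k')).2 else N.
have m_homo : {homo m : i j / (i <= j)%N}.
  apply: homo_leq leqnn leq_trans _ => k /=.
  by have [mk1 k12 _] := f_block (m k); exact: leq_trans mk1 k12.
exists e => //; exists (fun k => (f (m k)).1), (fun k => (f (m k)).2); split.
- by move=> k; have [mk _ _] := f_block (m k); exact: leq_trans (m_homo 0%N k isT) mk.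
- by move=> k k' kk'; have [mk _ _] := f_block (m k'); exact: leq_trans (m_homo _ _ kk') mk.
- by move=> k; have [_ _] := f_block (m k).
Qed.

Lemma uncond_convergent_of_tail_subsums_le {R : realType} {X : completeNormedModType R}
    {x : nat -> X} {N K} : ~ contains_c0 X ->
  (forall F : seq nat, uniq F -> (forall j, j \in F -> (N <= j)%N) ->
     `|\sum_(j <- F) x j| <= K) -> uncond_convergent x.
Proof.
move=> no_c0 tail_le p [q pK qK]; apply: contrapT => ncvg.
pose N' := (\max_(j < N) q j).+1.
have p_ge i : (N' <= i)%N -> (N <= p i)%N.
  move=> N'i; rewrite leqNgt; apply/negP => piN.
  have := @leq_bigmax _ (fun j : 'I_N => q j) (Ordinal piN); rewrite /= pK => iq.
  by have := leq_ltn_trans iq N'i; rewrite ltnn.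
have [e e_gt0 [a [b [N'a ordered blocks_ge]]]] := not_cvg_series_blocks N' ncvg.
apply: no_c0; apply: (contains_c0_of_subsums_le e_gt0 blocks_ge) => s us.
rewrite (_ : \sum_(t <- s) _ = \sum_(j <- map p (flatten [seq index_iota (a t) (b t) | t <- s])) x j).
  apply: tail_le; first by rewrite (map_inj_uniq (can_inj pK)) uniq_flatten_blocks.
  move=> j /mapP [i /flatten_mapP [t _]]; rewrite mem_index_iota => /andP [ati _] ->.
  exact/p_ge/(leq_trans (N'a t)).
by rewrite big_map big_flatten big_map.
Qed.

(** * Meagerness in the Baire space *)
Lemma prefix_nbhs (f : baire) n :
  nbhs f [set g : baire | forall i, (i < n)%N -> g i = f i].
Proof.
elim: n => [|n IHn]; first by apply: filterS filterT => g _ i.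
have fn : nbhs f [set g : baire | g n = f n].
  by have /(_ [set k | k = f n]) := @proj_continuous nat (fun _ => nat) n f; apply.
apply: filterS (filterI IHn fn) => g [g_eq gn] i; rewrite ltnS leq_eqVlt.
by case/orP => [/eqP -> //|]; exact: g_eq.
Qed.

Lemma nbhs_prefix (f : baire) (U : set baire) : nbhs f U ->
  exists n, forall g : baire, (forall i, (i < n)%N -> g i = f i) -> U g.
Proof.
move=> Uf; apply: contrapT => /forallNP no_prefix.
have /choice [G G_prefix] : forall n, exists g : baire,
    (forall i, (i < n)%N -> g i = f i) /\ ~ U g.
  by move=> n; have /existsNP [g /not_implyP] := no_prefix n; exists g.
have G_cvg : G @ \oo --> f.
  apply/(@pointwise_cvgP nat nat (G @ \oo) f _) => t A At; exists t.+1 => // n /= tn.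
  by have [G_eq _] := G_prefix n; rewrite /= G_eq //; exact: nbhs_singleton At.
have [N _ GU] := G_cvg U Uf.
by have [_] := G_prefix N; apply; exact: (GU N (leqnn N)).
Qed.

Section MeagerBoundedPsums.
Context {R : realType} {X : normedModType R} (x : nat -> X) (Q : set baire).

Let psums_le (M : R) : set (subspace Q) := [set s | Q s /\ forall m, `|psums x s m| <= M].

Lemma closure_psums_le M (g : baire) : Q g -> closure (psums_le M) g ->
  forall m, `|psums x g m| <= M.
Proof.
move=> Qg g_cl m.
have : nbhs (g : subspace Q) [set h | forall i, (i < m)%N -> h i = g i].
  by case: (nbhs_subspaceP Q g) => // _; apply: filterS (prefix_nbhs g m) => h hg _.
move=> /g_cl [h [[_ h_le] hg]].
rewrite (_ : psums x g m = psums x h m) //.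
by rewrite /psums !seriesEnat /=; apply: eq_big_nat => i /andP [_ im]; rewrite hg.
Qed.

Lemma interior_closure_psums_le M (f : baire) : (closure (psums_le M))° f ->
  Q f /\ exists n, forall g : baire, Q g -> (forall i, (i < n)%N -> g i = f i) ->
    forall m, `|psums x g m| <= M.
Proof.
move=> f_int.
have Qf : Q f.
  apply: contrapT => nQf; have /nbhs_singleton f_cl := f_int.
  have f_nbhs : nbhs (f : subspace Q) [set f] by case: (nbhs_subspaceP Q f) => // _ y ->.
  by have [g [[Qg _] gf]] := f_cl _ f_nbhs; apply: nQf; rewrite -gf.
split=> //; move: f_int; rewrite /interior; case: (nbhs_subspaceP Q f) => // _ /nbhs_prefix [n fn].
by exists n => g Qg gf; apply: closure_psums_le => //; exact: fn.
Qed.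

Lemma meager_bounded_psums :
  (forall (f : baire) n M, Q f -> (forall g : baire, Q g -> (forall i, (i < n)%N -> g i = f i) ->
     forall m, `|psums x g m| <= M) -> False) ->
  meager ([set s | Q s /\ bounded_seq (psums x s)] : set (subspace Q)).
Proof.
move=> no_bounded_cylinder; exists (fun M => psums_le M%:R); split.
  move=> M; apply/seteqP; split => // f /interior_closure_psums_le [Qf [n fn]].
  exact: no_bounded_cylinder Qf fn.
move=> s [Qs [B s_le]]; exists (Num.bound `|B|) => //; split => // m.
apply: le_trans (s_le m) (le_trans (ler_norm B) (ltW _)).
exact/archi_boundP/normr_ge0.
Qed.

End MeagerBoundedPsums.

Definition prefix_extendable (Q : set baire) : Prop :=
  forall (f : baire) n (F : seq nat), Q f -> uniq F ->
    (forall i j, (i < n)%N -> j \in F -> (f i < j)%N) ->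
  exists2 g : baire, Q g & exists2 F' : seq nat, perm_eq F' F &
    forall i, (i < n + size F)%N -> g i = nth 0%N ([seq f i | i <- iota 0 n] ++ F') i.

Lemma Sset_extend_sorted {L : seq nat} : sorted ltn L ->
  exists2 g : baire, Sset g & forall i, (i < size L)%N -> g i = nth 0%N L i.
Proof.
move=> L_sorted; pose B := \max_(j <- L) j.
have le_B i : (i < size L)%N -> (nth 0%N L i <= B)%N.
  by move=> iL; apply: leq_bigmax_seq; rewrite ?mem_nth.
exists (fun i => if (i < size L)%N then nth 0%N L i else B + i.+1)%N => [i j ij /=|i ->//].
have [jL|Lj] := ltnP j (size L).
  rewrite (ltn_trans ij jL); apply: (sorted_ltn_nth ltn_trans) => //.
  by rewrite inE (ltn_trans ij jL).
case: ifP => [iL|_]; last by rewrite ltn_add2l.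
by rewrite addnS ltnS (leq_trans (le_B _ iL)) // leq_addr.
Qed.

Lemma Pset_extend_uniq {L : seq nat} : uniq L ->
  exists2 g : baire, Pset g & forall i, (i < size L)%N -> g i = nth 0%N L i.
Proof.
move=> uL; pose m := ((\max_(j <- L) j).+1 + size L)%N.
(* [W] enumerates [0, m) starting with [L]; [g] follows [W] below [m] and is
   the identity above *)
pose W := L ++ [seq j <- iota 0 m | j \notin L].
have memW y : (y \in W) = (y < m)%N.
  rewrite mem_cat mem_filter mem_iota /=; case yL: (y \in L) => //=.
  by rewrite ltn_addr // ltnS; apply: leq_bigmax_seq.
have uW : uniq W.
  rewrite cat_uniq uL filter_uniq ?iota_uniq // andbT.
  by apply/hasPn => j; rewrite mem_filter => /andP [].
have sizeW : size W = m.
  have /perm_size -> : perm_eq W (iota 0 m) by apply: uniq_perm; rewrite ?iota_uniq // => y; rewrite memW mem_iota.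
  by rewrite size_iota.
pose g i := if (i < m)%N then nth 0%N W i else i.
pose h y := if (y < m)%N then index y W else y.
exists g => [|i iL]; last by rewrite /g nth_cat iL (leq_trans iL) // -sizeW size_cat leq_addr.
exists h => [i|y].
  rewrite /g; case: (ltnP i m) => im; last by rewrite /h ltnNge im.
  have Wi_m : (nth 0%N W i < m)%N by rewrite -memW mem_nth ?sizeW.
  by rewrite /h Wi_m index_uniq ?sizeW.
rewrite /h; case: (ltnP y m) => ym; last by rewrite /g ltnNge ym.
have iy_m : (index y W < m)%N by rewrite -[X in (_ < X)%N]sizeW index_mem memW.
by rewrite /g iy_m nth_index ?memW.
Qed.

Lemma Sset_prefix_extendable : prefix_extendable Sset.
Proof.
move=> f n F Sf uF f_lt.
pose L := [seq f i | i <- iota 0 n] ++ sort leq F.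
have L_sorted : sorted ltn L.
  rewrite (sorted_pairwise ltn_trans) pairwise_cat; apply/and3P; split.
  - apply/allrelP => k j /mapP [i]; rewrite mem_iota => /andP [_ i_n] ->.
    by rewrite mem_sort; exact: f_lt.
  - rewrite pairwise_map; apply: (@sub_pairwise _ ltn) => [i j|]; first exact: Sf.
    by rewrite -(sorted_pairwise ltn_trans) iota_ltn_sorted.
  - by rewrite -(sorted_pairwise ltn_trans) ltn_sorted_uniq_leq sort_uniq uF (sort_sorted leq_total).
have [g Sg gL] := Sset_extend_sorted L_sorted.
exists g => //; exists (sort leq F); first by rewrite perm_sort.
by move=> i i_lt; apply: gL; rewrite size_cat size_map size_iota size_sort.
Qed.

Lemma Pset_prefix_extendable : prefix_extendable Pset.
Proof.
move=> f n F Pf uF f_lt.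
have f_inj : injective f by case: Pf => f' fK _; exact: can_inj fK.
pose L := [seq f i | i <- iota 0 n] ++ F.
have uL : uniq L.
  rewrite cat_uniq (map_inj_uniq f_inj) iota_uniq uF andbT /=.
  apply/hasPn => j jF; apply/negP => /mapP [i]; rewrite mem_iota => /andP [_ i_n] ji.
  by have := f_lt i j i_n jF; rewrite ji ltnn.
have [g Pg gL] := Pset_extend_uniq uL.
exists g => //; exists F => // i i_lt; apply: gL.
by rewrite size_cat size_map size_iota.
Qed.

Lemma psums_nth {R : realType} {X : normedModType R} (x : nat -> X) (g : baire) (L : seq nat) :
  (forall i, (i < size L)%N -> g i = nth 0%N L i) -> psums x g (size L) = \sum_(j <- L) x j.
Proof.
move=> gL; rewrite /psums seriesEnat /= [RHS](big_nth 0%N).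
by apply: eq_big_nat => i /andP [_ iL]; rewrite gL.
Qed.

Lemma tail_subsums_le_of_bounded_cylinder {R : realType} {X : normedModType R}
    (x : nat -> X) (Q : set baire) (f : baire) n M :
  prefix_extendable Q -> Q f ->
  (forall g : baire, Q g -> (forall i, (i < n)%N -> g i = f i) ->
     forall m, `|psums x g m| <= M) ->
  forall F : seq nat, uniq F -> (forall j, j \in F -> ((\max_(i < n) f i).+1 <= j)%N) ->
    `|\sum_(j <- F) x j| <= 2 * M.
Proof.
move=> Q_ext Qf f_le F uF F_gt.
have f_lt i j : (i < n)%N -> j \in F -> (f i < j)%N.
  move=> i_n jF; apply: leq_trans (F_gt j jF); rewrite ltnS.
  exact: (@leq_bigmax _ (fun k : 'I_n => f k) (Ordinal i_n)).
have [g Qg [F' F'F gL]] := Q_ext f n F Qf uF f_lt.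
pose L := [seq f i | i <- iota 0 n] ++ F'.
have sizeL : size L = (n + size F)%N by rewrite size_cat size_map size_iota (perm_size F'F).
have g_prefix i : (i < n)%N -> g i = f i.
  move=> i_n; rewrite gL ?(leq_trans i_n (leq_addr _ _)) // nth_cat size_map size_iota i_n.
  by rewrite (nth_map 0%N) ?size_iota // nth_iota.
have psums_gL : psums x g (size L) = psums x f n + \sum_(j <- F) x j.
  rewrite psums_nth ?sizeL // big_cat big_map (perm_big _ F'F).
  by rewrite /psums seriesEnat /= /index_iota subn0.
have -> : \sum_(j <- F) x j = psums x g (size L) - psums x f n by rewrite psums_gL addrC addKr.
apply: le_trans (ler_normB _ _) _; rewrite mulr2n mulrDl mul1r.
by apply: lerD; apply: f_le.
Qed.

Lemma meager_bounded_rearranged_psums {R : realType} {X : completeNormedModType R}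
    (x : nat -> X) (Q : set baire) :
  prefix_extendable Q -> ~ contains_c0 X -> ~ uncond_convergent x ->
  meager ([set s | Q s /\ bounded_seq (psums x s)] : set (subspace Q)).
Proof.
move=> Q_ext no_c0 not_uc; apply: meager_bounded_psums => f n M Qf f_le.
apply/not_uc/(uncond_convergent_of_tail_subsums_le no_c0).
exact: tail_subsums_le_of_bounded_cylinder Q_ext Qf f_le.
Qed.

Theorem mainTheorem4 (R : realType) (X : completeNormedModType R) (x : nat -> X) :
  ~ contains_c0 X -> ~ uncond_convergent x ->
  meager ([set s | Sset s /\ bounded_seq (psums x s)] : set (subspace Sset)) /\
  meager ([set p | Pset p /\ bounded_seq (psums x p)] : set (subspace Pset)).
Proof.
move=> no_c0 not_uc; split; apply: meager_bounded_rearranged_psums => //.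
- exact: Sset_prefix_extendable.
- exact: Pset_prefix_extendable.
Qed.
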